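(* In the setting below, there are constants $C_1$ depending only on $c_Y$ and $C_2$ depending only on $p,c_Y$ such that for every $f\in B(X,Y)$: $d_p(f,A^{(p)}_\mu f)\le C_1\big(\mathcal E^{(p)}_\mu(f)\big)^{1/p}$ and $\mathcal E^{(p)}_\mu(A^{(p)}_\mu f)\le C_2\,\mathcal E^{(p)}_\mu(f)$.
   Context: Let $p\ge2$ and $(Y,d_Y)$ a complete geodesic metric space which is $p$-uniformly convex with constant $c_Y>0$ (i.e. $d_Y(x,\gamma(t))^p\le(1-t)d_Y(x,y)^p+t\,d_Y(x,z)^p-c_Y^pt(1-t)d_Y(y,z)^p$ for all $x,y,z$, constant-speed geodesics $\gamma$ from $y$ to $z$, $t\in[0,1]$). For a finitely supported probability measure $\sigma$ on $Y$, $c_p(\sigma)$ is the unique minimizer of $y\mapsto\int d_Y(u,y)^p\,d\sigma(u)$. Let $\Gamma$ be a discrete group acting freely on a discrete set $X$ and by isometries on $Y$; $\mu$ a $\Gamma$-equivariant random walk on $X$ (each $\mu(x\to\cdot)$ a finitely supported probability measure, $\mu(\gamma x\to\gamma x')=\mu(x\to x')$); $\bar\nu$ a probability measure on $\Gamma\backslash X$, $\nu(\{x\})=\bar\nu(\{\Gamma x\})$, with $\nu(x)\mu(x\to x')=\nu(x')\mu(x'\to x)$. For equivariant $f$: $\mathcal E^{(p)}_\mu(f)=\frac12\int_{\Gamma\backslash X}\sum_{x'}\mu(x\to x')d_Y(f(x),f(x'))^p\,d\bar\nu(x)$; $B(X,Y)$ = equivariant $f$ with finite energy; $d_p(f,g)=\big(\int_{\Gamma\backslash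 X}d_Y(f(x),g(x))^pd\bar\nu\big)^{1/p}$; $(A^{(p)}_\mu f)(x)=c_p(f_*\mu(x\to\cdot))$. *)

From mathcomp Require Import all_boot all_order all_algebra.
From mathcomp Require Import all_classical all_reals all_analysis.
From Stdlib Require Import ClassicalEpsilon.

Set Implicit Arguments.
Unset Strict Implicit.
Unset Printing Implicit Defensive.
Import Order.TTheory GRing.Theory Num.Theory.
Local Open Scope classical_set_scope.
Local Open Scope ring_scope.

Section Defs.
Variable R : realType.

Section Metric.
Variables (Y : Type) (d : Y -> Y -> R).

Definition is_metric : Prop :=
  [/\ (forall x y, 0 <= d x y),
      (forall x y, d x y = 0 <-> x = y),
      (forall x y, d x y = d y x) &
      (forall x y z, d x z <= d x y + d y z)].

Definition is_complete : Prop :=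
  forall u : nat -> Y,
    (forall e, 0 < e -> exists N, forall m n, (N <= m)%N -> (N <= n)%N ->
        d (u m) (u n) < e) ->
    exists l, forall e, 0 < e -> exists N, forall n, (N <= n)%N -> d (u n) l < e.

Definition is_cs_geodesic (gam : R -> Y) (y z : Y) : Prop :=
  [/\ gam 0 = y, gam 1 = z &
      forall s t, 0 <= s <= 1 -> 0 <= t <= 1 ->
        d (gam s) (gam t) = `|s - t| * d y z].

Definition is_geodesic_space : Prop :=
  forall y z, exists gam, is_cs_geodesic gam y z.

Definition p_uniformly_convex (p c : R) : Prop :=
  forall x y z (gam : R -> Y), is_cs_geodesic gam y z ->
    forall t, 0 <= t <= 1 ->
      d x (gam t) `^ p <=
        (1 - t) * d x y `^ p + t * d x z `^ p
        - c `^ p * t * (1 - t) * d y z `^ p.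
End Metric.

Definition is_group (G : Type) (mul : G -> G -> G) (one : G) (inv : G -> G)
  : Prop :=
  [/\ (forall a b c, mul a (mul b c) = mul (mul a b) c),
      (forall a, mul one a = a), (forall a, mul a one = a),
      (forall a, mul (inv a) a = one) & (forall a, mul a (inv a) = one)].

Definition is_action (G S : Type) (mul : G -> G -> G) (one : G)
  (act : G -> S -> S) : Prop :=
  (forall x, act one x = x) /\ (forall g h x, act (mul g h) x = act g (act h x)).

Definition free_action (G S : Type) (one : G) (act : G -> S -> S) : Prop :=
  forall g x, act g x = x -> g = one.

Definition isometric_action (G Y : Type) (d : Y -> Y -> R)
  (act : G -> Y -> Y) : Prop :=
  forall g y y', d (act g y) (act g y') = d y y'.

(* Q together with pi : X -> Q is the orbit space Gamma\X, and s is a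
   section of pi (a choice of one representative in each orbit). *)
Definition is_orbit_space (G : Type) (X Q : Type) (act : G -> X -> X)
  (pi : X -> Q) (s : Q -> X) : Prop :=
  (forall q, pi (s q) = q) /\
  (forall x x', pi x = pi x' <-> exists g, x' = act g x).

Section Walk.
Variables (X Q : choiceType).

Definition is_random_walk (mu : X -> X -> R) : Prop :=
  forall x, [/\ (forall x', 0 <= mu x x'),
      finite_set [set x' | mu x x' != 0] &
      (\esum_(x' in [set: X]) (mu x x')%:E = 1)%E].

Definition equivariant_walk (G : Type) (act : G -> X -> X)
  (mu : X -> X -> R) : Prop :=
  forall g x x', mu (act g x) (act g x') = mu x x'.

(* probability measure bar nu on the discrete set Q = Gamma\X,
   given by its point masses *)
Definition is_prob_on (nub : Q -> R) : Prop :=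
  (forall q, 0 <= nub q) /\ (\esum_(q in [set: Q]) (nub q)%:E = 1)%E.

(* nu({x}) = bar nu({Gamma x}) and nu(x) mu(x->x') = nu(x') mu(x'->x) *)
Definition reversible (pi : X -> Q) (nub : Q -> R) (mu : X -> X -> R)
  : Prop :=
  forall x x', nub (pi x) * mu x x' = nub (pi x') * mu x' x.

Variables (Y : Type) (d : Y -> Y -> R) (p : R).

(* integral over Gamma\X of a Gamma-invariant quantity, computed on the
   representatives s q *)
Definition energy (mu : X -> X -> R) (nub : Q -> R) (s : Q -> X)
  (f : X -> Y) : \bar R :=
  ((2^-1)%:E *
   \esum_(q in [set: Q])
      ((nub q)%:E *
       \esum_(x' in [set: X]) (mu (s q) x' * d (f (s q)) (f x') `^ p)%:E))%E.

Definition dist_p (nub : Q -> R) (s : Q -> X) (f g : X -> Y) : \bar R :=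
  poweR (\esum_(q in [set: Q]) (nub q * d (f (s q)) (g (s q)) `^ p)%:E)
        p^-1.

Definition equivariant_map (G : Type) (actX : G -> X -> X)
  (actY : G -> Y -> Y) (f : X -> Y) : Prop :=
  forall g x, f (actX g x) = actY g (f x).

Definition in_B (G : Type) (actX : G -> X -> X) (actY : G -> Y -> Y)
  (mu : X -> X -> R) (nub : Q -> R) (s : Q -> X) (f : X -> Y) : Prop :=
  equivariant_map actX actY f /\ (energy mu nub s f < +oo)%E.

Definition push_cost (mu : X -> X -> R) (f : X -> Y) (x : X) (y : Y)
  : \bar R :=
  \esum_(x' in [set: X]) (mu x x' * d (f x') y `^ p)%:E.

Definition barycenter_p (mu : X -> X -> R) (f : X -> Y) (x : X) : Y :=
  epsilon (inhabits (f x))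
    (fun y => forall z, (push_cost mu f x y <= push_cost mu f x z)%E).

Definition A_p (mu : X -> X -> R) (f : X -> Y) : X -> Y :=
  fun x => barycenter_p mu f x.
End Walk.

End Defs.

From mathcomp Require Import all_boot all_order all_algebra.
From mathcomp Require Import finmap.
From mathcomp Require Import all_classical all_reals all_analysis.
From mathcomp Require Import ring lra.
From Stdlib Require Import ClassicalEpsilon.

(* In a complete p-uniformly convex geodesic space the midpoint inequality
   makes every minimizing sequence of y |-> sum_i w_i d(g_i, y)^p Cauchy, so
   p-barycenters exist.  Comparing A f x with the competitor f x gives
   d(f x, A f x)^p <= 2^(p+1) e(x), where e(x) = sum_x' mu(x -> x') d(f x, f x')^p
   is the local energy and E(f) = 1/2 int e; integrating yields the first
   bound with C1 = 4 (here p >= 2 is used).  For the second, the triangle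
   inequality through f x and f x' bounds the local energy of A f by a
   multiple of e(x) + sum_x' mu(x -> x') e(x'), and reversibility together
   with Gamma-equivariance shows that the last term has the same integral
   over Gamma\X as e. *)

Set Implicit Arguments.
Unset Strict Implicit.
Unset Printing Implicit Defensive.
Import Order.TTheory GRing.Theory Num.Theory.
Import numFieldNormedType.Exports.
Local Open Scope classical_set_scope.
Local Open Scope ring_scope.

Lemma eventually_invS_lt (R : realType) (e : R) : 0 < e ->
  exists N, forall n, (N <= n)%N -> n.+1%:R^-1 < e.
Proof. by move=> e0; have [N _ HN] := near_infty_natSinv_lt (PosNum e0); exists N. Qed.

Section real_powers.
Variable R : realType.
Implicit Types a b c u v p e : R.

Lemma powR_le_self u p : 0 <= u <= 1 -> 1 <= p -> u `^ p <= u.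
Proof.
move=> /andP[u0 u1] p1; have [->|un0] := eqVneq u 0.
  by rewrite powR0 // gt_eqF // (lt_le_trans _ p1).
by rewrite ge1r_powR // lt_def un0 u0.
Qed.

Lemma powR_nondecreasing u v p : 0 <= u -> 0 <= p -> u <= v -> u `^ p <= v `^ p.
Proof. by move=> u0 p0 uv; rewrite ge0_ler_powR // nnegrE (le_trans u0). Qed.

Lemma powR_continuous_nonneg v p : 0 <= v -> 1 <= p ->
  forall e, 0 < e -> exists2 del, 0 < del &
    forall u, 0 <= u -> `|v - u| < del -> `|v `^ p - u `^ p| < e.
Proof.
move=> v0 p1 e e0; have [->|vn0] := eqVneq v 0.
  exists (Num.min 1 e) => [|u u0]; first by rewrite lt_min ltr01 e0.
  rewrite powR0 ?gt_eqF ?(lt_le_trans _ p1) // !sub0r !normrN.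
  rewrite !ger0_norm ?powR_ge0 // lt_min => /andP[u1 ue].
  by rewrite (le_lt_trans _ ue) // powR_le_self // u0 ltW.
have vp : 0 < v by rewrite lt_def vn0 v0.
have /cvgr_dist_lt /(_ e e0) /nbhs_ballP [del del0 Hdel] :
    {for v, continuous (fun x : R => x `^ p)}.
  apply/differentiable_continuous/derivable1_diffP.
  by apply: derivable_powR; rewrite in_itv /= vp.
by exists del => // u _ vu; apply: Hdel.
Qed.

Lemma powRD_le a b p : 0 <= a -> 0 <= b -> 0 <= p ->
  (a + b) `^ p <= 2 `^ p * (a `^ p + b `^ p).
Proof.
move=> a0 b0 p0; wlog ab : a b a0 b0 / a <= b.
  move=> hwlog; case: (leP a b) => [|/ltW] ba; first exact: hwlog.
  by rewrite addrC [a `^ p + _]addrC hwlog.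
have -> : 2 `^ p * (a `^ p + b `^ p) = (2 * b) `^ p + 2 `^ p * a `^ p.
  by rewrite powRM // mulrDr addrC.
rewrite -[leLHS]addr0 lerD ?mulr_ge0 ?powR_ge0 //.
by rewrite powR_nondecreasing ?addr_ge0 // mulr2n mulrDl mul1r lerD2r.
Qed.

Lemma powRD3_le a b c p : 0 <= a -> 0 <= b -> 0 <= c -> 0 <= p ->
  (a + b + c) `^ p <= 2 `^ p * 2 `^ p * (a `^ p + b `^ p + c `^ p).
Proof.
move=> a0 b0 c0 p0.
apply: le_trans (powRD_le (addr_ge0 a0 b0) c0 p0) _.
have two_p : 1 <= 2 `^ p :> R by rewrite -[leLHS](powRr0 2) ler_powR // ler1n.
rewrite -mulrA ler_wpM2l ?powR_ge0 // mulrDr lerD ?powRD_le //.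
by rewrite ler_peMl ?powR_ge0.
Qed.

End real_powers.
Lemma ler_dist_sub (R : realType) (Y : Type) (d : Y -> Y -> R) :
  is_metric d -> forall a y z, `|d a z - d a y| <= d y z.
Proof.
case=> _ _ dsym dtri a y z; rewrite ler_norml; apply/andP; split.
  by have := dtri a z y; rewrite (dsym z y); lra.
by have := dtri a y z; lra.
Qed.

Section pcost.
Variables (R : realType) (Y : Type) (d : Y -> Y -> R) (p : R).
Variables (I : Type) (w : I -> R) (g : I -> Y).
Hypothesis w_ge0 : forall i, 0 <= w i.

Definition pcost (S : seq I) (y : Y) : R := \sum_(i <- S) w i * d (g i) y `^ p.

Lemma pcost_ge0 S y : 0 <= pcost S y.
Proof. by apply: sumr_ge0 => i _; rewrite mulr_ge0 ?powR_ge0. Qed.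

Hypothesis dm : is_metric d.

Lemma pcost_continuous S l : 1 <= p -> forall e : R, 0 < e ->
  exists2 del : R, 0 < del & forall y, d y l < del -> `|pcost S l - pcost S y| < e.
Proof.
have [d_ge0 _ _ _] := dm; move=> p1; elim: S => [|i S IH] e e0.
  by exists 1 => // y _; rewrite /pcost !big_nil subrr normr0.
have e20 : 0 < e / 2 by rewrite divr_gt0.
have [del1 del10 H1] := IH _ e20.
have [del2 del20 H2] : exists2 del : R, 0 < del & forall y, d y l < del ->
    `|w i * d (g i) l `^ p - w i * d (g i) y `^ p| < e / 2.
  have [->|wn0] := eqVneq (w i) 0.
    by exists 1 => // y _; rewrite !mul0r subrr normr0.
  have wp : 0 < w i by rewrite lt_def wn0 w_ge0.
  have [del del0 Hdel] :=
    powR_continuous_nonneg (d_ge0 (g i) l) p1 (divr_gt0 e20 wp).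
  exists del => // y dy; rewrite -mulrBr normrM (gtr0_norm wp) -ltr_pdivlMl //.
  by rewrite mulrC Hdel // (le_lt_trans (ler_dist_sub dm (g i) y l)).
exists (Num.min del1 del2) => [|y]; first by rewrite lt_min del10 del20.
rewrite lt_min => /andP[/H1 h1 /H2 h2]; rewrite /pcost !big_cons.
have -> (a b a' b' : R) : a + b - (a' + b') = (a - a') + (b - b') by ring.
by rewrite (le_lt_trans (ler_normD _ _)) // (splitr e) ltrD.
Qed.

Variable c : R.
Hypotheses (geo : is_geodesic_space d) (uc : p_uniformly_convex d p c).
Variable S : seq I.
Hypothesis w_sum1 : \sum_(i <- S) w i = 1.

Lemma pcost_midpoint y z : exists m, pcost S m <=
  2^-1 * pcost S y + 2^-1 * pcost S z - c `^ p * 4^-1 * d y z `^ p.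
Proof.
have [gam gam_geo] := geo y z; exists (gam 2^-1).
have half01 : 0 <= (2^-1 : R) <= 1 by apply/andP; split; lra.
apply: (le_trans (ler_sum _ (fun i _ =>
  ler_wpM2l (w_ge0 i) (uc (g i) gam_geo half01)))).
have -> : c `^ p * 4^-1 * d y z `^ p =
    c `^ p * 4^-1 * d y z `^ p * \sum_(i <- S) w i by rewrite w_sum1 mulr1.
rewrite /pcost !mulr_sumr -big_split -sumrB /=.
apply: ler_sum => i _; rewrite le_eqVlt; apply/orP; left; apply/eqP.
have -> : (1 - 2^-1 : R) = 2^-1 by lra.
have -> : (4^-1 : R) = 2^-1 * 2^-1 by field.
ring.
Qed.

Lemma pcost_minimizing_cauchy (m : R) (ys : nat -> Y) : 0 < c -> 0 < p ->
  (forall y, m <= pcost S y) -> (forall n, pcost S (ys n) < m + n.+1%:R^-1) ->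
  forall e, 0 < e -> exists N, forall n k, (N <= n)%N -> (N <= k)%N ->
    d (ys n) (ys k) < e.
Proof.
move=> c0 p0 m_le ys_min e e0; have [d_ge0 _ _ _] := dm.
have cp0 : 0 < c `^ p by rewrite powR_gt0.
have [N HN] := eventually_invS_lt (divr_gt0 (mulr_gt0 cp0 (powR_gt0 p e0))
  (ltr0n R 4)).
exists N => n k Nn Nk; rewrite ltNge; apply/negP => e_le.
have [mid mid_le] := pcost_midpoint (ys n) (ys k).
have ep_le : c `^ p * e `^ p <= c `^ p * d (ys n) (ys k) `^ p.
  by rewrite ler_wpM2l ?(ltW cp0) // powR_nondecreasing // ?(ltW e0) ?(ltW p0).
move: mid_le ep_le (m_le mid) (ys_min n) (ys_min k) (HN n Nn) (HN k Nk).
have -> : c `^ p * 4^-1 * d (ys n) (ys k) `^ p =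
  (c `^ p * d (ys n) (ys k) `^ p) / 4 by field.
set cD := c `^ p * d _ _ `^ p; set cE := c `^ p * e `^ p.
set u := n.+1%:R^-1; set v := k.+1%:R^-1; lra.
Qed.

Lemma exists_pcost_minimizer (y0 : Y) : is_complete d -> 0 < c -> 1 <= p ->
  exists l, forall z, pcost S l <= pcost S z.
Proof.
move=> dc c0 p1; pose E := [set pcost S y | y in [set: Y]].
have E_inf : has_inf E.
  by split; [exists (pcost S y0), y0 | exists 0 => _ [y _ <-]; exact: pcost_ge0].
have m_le z : inf E <= pcost S z by apply: ge_inf; [exact: E_inf.2 | exists z].
have approx n : exists y, pcost S y < inf E + n.+1%:R^-1.
  have inv_gt0 : 0 < (n.+1%:R^-1 : R) by rewrite invr_gt0.
  by have [_ [y _ <-] ?] := @inf_adherent R E _ inv_gt0 E_inf; exists y.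
have [ys ys_min] := boolp.choice approx.
have [l ys_to_l] := dc ys (pcost_minimizing_cauchy c0 (lt_le_trans ltr01 p1)
  m_le ys_min).
exists l => z; apply: le_trans (m_le z); rewrite leNgt; apply/negP => lt_l.
have gap0 : 0 < (pcost S l - inf E) / 2 by rewrite divr_gt0 // subr_gt0.
have [del del0 Hdel] := pcost_continuous S l p1 gap0.
have [N1 HN1] := ys_to_l _ del0.
have [N2 HN2] := eventually_invS_lt gap0.
have := Hdel _ (HN1 _ (leq_maxl N1 N2)); have := ys_min (maxn N1 N2).
have := HN2 _ (leq_maxr N1 N2).
have := ler_norm (pcost S l - pcost S (ys (maxn N1 N2))).
set u := _.+1%:R^-1; lra.
Qed.

End pcost.

Section esum_scale.
Variables (R : realType) (T : choiceType) (I : set T).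

Lemma ge0_esumZl_le (k : R) (a : T -> \bar R) : 0 <= k ->
  (forall i, I i -> (0 <= a i)%E) ->
  (\esum_(i in I) (k%:E * a i) <= k%:E * \esum_(i in I) a i)%E.
Proof.
move=> k0 a0; apply: ge_ereal_sup => /= _ [F [finF FI]] <-.
have aF_ge0 i : (0 <= (if i \in F then a i else 0))%E.
  by case: ifP => // /[1!inE] /FI; exact: a0.
rewrite (eq_fsbigr (fun i => k%:E * (if i \in F then a i else 0)))%E; last first.
  by move=> i /[1!inE] Fi; rewrite ifT // inE.
rewrite -ge0_mule_fsumr // lee_wpmul2l ?lee_fin //.
apply: ereal_sup_ubound; exists F => //.
by apply: eq_fsbigr => i /[1!inE] Fi; rewrite ifT // inE.
Qed.

Lemma ge0_esumZl (k : R) (a : T -> \bar R) : 0 <= k ->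
  (forall i, I i -> (0 <= a i)%E) ->
  (\esum_(i in I) (k%:E * a i) = k%:E * \esum_(i in I) a i)%E.
Proof.
move=> k0 a0; apply/eqP; rewrite eq_le ge0_esumZl_le //=.
have [->|kn0] := eqVneq k 0.
  by rewrite mul0e esum_ge0 // => i _; rewrite mul0e.
have k_gt0 : 0 < k by rewrite lt_def kn0 k0.
have ka_ge0 i : I i -> (0 <= k%:E * a i)%E by move=> Ii; rewrite mule_ge0 ?lee_fin ?a0.
have kV_ge0 : 0 <= k^-1 by rewrite invr_ge0.
have := ge0_esumZl_le kV_ge0 ka_ge0.
under eq_esum => i _ do rewrite muleA -EFinM mulVf ?gt_eqF // mul1e.
move=> le_kV; rewrite -(lee_pmul2l (x := k^-1%:E)) ?lte_fin ?invr_gt0 //.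
by rewrite muleA -EFinM mulVf ?gt_eqF // mul1e.
Qed.

End esum_scale.

Lemma esum_fin_support (R : realType) (T : choiceType) (a : T -> R) (F : {fset T}) :
  (forall x, 0 <= a x) -> (forall x, x \notin F -> a x = 0) ->
  (\esum_(x in [set: T]) (a x)%:E = (\sum_(x <- F) a x)%:E)%E.
Proof.
move=> a0 aF.
rewrite (esumID [set x | x \in F]); last by move=> *; rewrite lee_fin.
rewrite [X in (_ + X)%E]esum1 ?adde0; last first.
  by move=> x [_ /= xF]; rewrite aF //; apply/negP.
rewrite setTI esum_fset //; last by move=> *; rewrite lee_fin.
by rewrite fsumEFin // fsbig_finite // set_fsetK.
Qed.

Section random_walk.
Variables (R : realType) (X : choiceType) (mu : X -> X -> R).
Hypothesis rw : is_random_walk mu.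

Definition supp (x : X) : {fset X} := fset_set [set x' | mu x x' != 0].

Lemma notin_supp x y : y \notin supp x -> mu x y = 0.
Proof.
have [_ fin _] := rw x; rewrite /supp in_fset_set // => /negP y_notin.
by have [//|y_in] := eqVneq (mu x y) 0; case: y_notin; rewrite inE.
Qed.

Lemma esum_walk (h : X -> R) x : (forall y, 0 <= h y) ->
  (\esum_(y in [set: X]) (mu x y * h y)%:E = (\sum_(y <- supp x) mu x y * h y)%:E)%E.
Proof.
have [mu_ge0 _ _] := rw x; move=> h0.
apply: esum_fin_support => [y|y /notin_supp ->]; last by rewrite mul0r.
by rewrite mulr_ge0.
Qed.

Lemma sum_walk1 x : \sum_(y <- supp x) mu x y = 1.
Proof.
have [_ _ mu1] := rw x; have := @esum_walk (fun=> 1) x (fun=> ler01).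
under eq_esum do rewrite mulr1.
rewrite mu1 => /esym /eqP; rewrite eqe => /eqP <-.
by apply: eq_bigr => y _; rewrite mulr1.
Qed.

End random_walk.

Section barycenter_map.
Variables (R : realType) (Y : Type) (d : Y -> Y -> R) (p c : R).
Hypotheses (dm : is_metric d) (dc : is_complete d) (geo : is_geodesic_space d)
  (uc : p_uniformly_convex d p c) (c_gt0 : 0 < c) (p_ge1 : 1 <= p).
Variables (X : choiceType) (mu : X -> X -> R).
Hypothesis rw : is_random_walk mu.

Definition local_energy (f : X -> Y) (x : X) : R :=
  \sum_(y <- supp mu x) mu x y * d (f x) (f y) `^ p.

Lemma local_energy_ge0 f x : 0 <= local_energy f x.
Proof.
have [mu_ge0 _ _] := rw x.
by apply: sumr_ge0 => y _; rewrite mulr_ge0 ?powR_ge0.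
Qed.

Variable f : X -> Y.
Local Notation A := (A_p d p mu f).
Local Notation F x := (pcost d p (mu x) f (supp mu x)).

Lemma A_p_minimizes x z : F x (A x) <= F x z.
Proof.
have [mu_ge0 _ _] := rw x.
have push_costE y : push_cost d p mu f x y = (F x y)%:E.
  by rewrite /push_cost esum_walk // => y'; exact: powR_ge0.
have [l l_min] := exists_pcost_minimizer f mu_ge0 dm geo uc (sum_walk1 rw x) (f x)
  dc c_gt0 p_ge1.
have A_min : forall z, (push_cost d p mu f x (A x) <= push_cost d p mu f x z)%E.
  apply: (epsilon_spec (inhabits (f x))
    (fun y => forall z, (push_cost d p mu f x y <= push_cost d p mu f x z)%E)).
  by exists l => z'; rewrite !push_costE lee_fin.
by have := A_min z; rewrite !push_costE lee_fin.
Qed.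

Lemma dist_A_p_le x : d (f x) (A x) `^ p <= 2 `^ p * 2 * local_energy f x.
Proof.
have [d_ge0 _ dsym dtri] := dm; have [mu_ge0 _ _] := rw x.
have p_ge0 : 0 <= p := le_trans ler01 p_ge1.
rewrite -[leLHS]mul1r -{1}(sum_walk1 rw x) mulr_suml.
apply: (@le_trans _ _ (\sum_(y <- supp mu x)
    mu x y * (2 `^ p * (d (f x) (f y) `^ p + d (f y) (A x) `^ p)))).
  apply: ler_sum => y _; rewrite ler_wpM2l //.
  by rewrite (le_trans _ (powRD_le (d_ge0 _ _) (d_ge0 _ _) p_ge0))
    // powR_nondecreasing.
have F_fx : F x (f x) = local_energy f x.
  by apply: eq_bigr => y _; rewrite dsym.
have -> : \sum_(y <- supp mu x)
    mu x y * (2 `^ p * (d (f x) (f y) `^ p + d (f y) (A x) `^ p)) =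
    2 `^ p * (local_energy f x + F x (A x)).
  by rewrite /local_energy /pcost -big_split mulr_sumr /=; apply: eq_bigr => y _; ring.
have := A_p_minimizes x (f x); rewrite F_fx => A_le.
by rewrite -mulrA; apply: ler_wpM2l; [exact: powR_ge0 | lra].
Qed.

Lemma local_energy_A_p_le x : local_energy A x <=
  2 `^ p * 2 `^ p * (2 `^ p * 2 * local_energy f x + local_energy f x
    + 2 `^ p * 2 * \sum_(y <- supp mu x) mu x y * local_energy f y).
Proof.
have [d_ge0 _ dsym dtri] := dm; have [mu_ge0 _ _] := rw x.
have p_ge0 : 0 <= p := le_trans ler01 p_ge1.
set K := 2 `^ p * 2 `^ p; set B := 2 `^ p * 2.
have K_ge0 : 0 <= K by rewrite mulr_ge0 ?powR_ge0.
apply: (@le_trans _ _ (\sum_(y <- supp mu x) mu x y * (K * (B * local_energy f x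
    + d (f x) (f y) `^ p + B * local_energy f y)))).
  apply: ler_sum => y _; rewrite ler_wpM2l //.
  have A_tri : d (A x) (A y) <= d (f x) (A x) + d (f x) (f y) + d (f y) (A y).
    have := dtri (A x) (f x) (A y); have := dtri (f x) (f y) (A y).
    by rewrite (dsym (A x) (f x)); lra.
  apply: le_trans (powR_nondecreasing (d_ge0 _ _) p_ge0 A_tri) _.
  apply: le_trans (powRD3_le (d_ge0 _ _) (d_ge0 _ _) (d_ge0 _ _) p_ge0) _.
  apply: ler_wpM2l => //; have := dist_A_p_le x; have := dist_A_p_le y.
  by rewrite -/B; lra.
rewrite le_eqVlt; apply/orP; left; apply/eqP.
transitivity (\sum_(y <- supp mu x) (K * B * local_energy f x) * mu x y
  + \sum_(y <- supp mu x) K * (mu x y * d (f x) (f y) `^ p)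
  + \sum_(y <- supp mu x) (K * B) * (mu x y * local_energy f y)).
  by rewrite -!big_split /=; apply: eq_bigr => y _; ring.
by rewrite -!mulr_sumr sum_walk1 // /local_energy; ring.
Qed.

End barycenter_map.

Section group_action.
Variables (G S : Type) (mul : G -> G -> G) (one : G) (inv : G -> G).
Variable act : G -> S -> S.
Hypotheses (grp : is_group mul one inv) (acts : is_action mul one act).

Lemma actK g : cancel (act g) (act (inv g)).
Proof.
by case: grp => _ _ _ mulVg _; case: acts => act1 actM x; rewrite -actM mulVg act1.
Qed.

Lemma actKV g : cancel (act (inv g)) (act g).
Proof.
by case: grp => _ _ _ _ mulgV; case: acts => act1 actM x; rewrite -actM mulgV act1.
Qed.

Lemma inv_involutive : involutive inv.
Proof.
case: grp => mulA mul1g mulg1 mulVg mulgV a.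
by rewrite -[inv (inv a)]mulg1 -(mulVg a) mulA mulVg mul1g.
Qed.

Lemma free_act_inj x : free_action one act -> injective (act^~ x).
Proof.
move=> free a b /= eq_ab; have [mulA mul1g mulg1 mulVg mulgV] := grp.
have /free ba1 : act (mul (inv b) a) x = x.
  by case: acts => act1 actM; rewrite actM eq_ab -actM mulVg act1.
by rewrite -[a]mul1g -(mulgV b) -mulA ba1 mulg1.
Qed.

End group_action.

Lemma pi_act (G X Q : Type) (act : G -> X -> X) (pi : X -> Q) (s : Q -> X) :
  is_orbit_space act pi s -> forall g x, pi (act g x) = pi x.
Proof. by case=> _ orbitP g x; symmetry; apply/orbitP; exists g. Qed.

Section orbit_sum.
Variables (R : realType) (G : Type) (mul : G -> G -> G) (one : G) (inv : G -> G).
Variables (X Q : choiceType) (actX : G -> X -> X) (pi : X -> Q) (s : Q -> X).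
Hypotheses (grp : is_group mul one inv) (acts : is_action mul one actX)
  (free : free_action one actX) (orbits : is_orbit_space actX pi s).

Definition orbit_coord (x : X) : G :=
  epsilon (inhabits one) (fun g => x = actX g (s (pi x))).

Lemma orbit_coordP x : x = actX (orbit_coord x) (s (pi x)).
Proof.
have [pi_s orbitP] := orbits.
by apply: (epsilon_spec (inhabits one) (fun g => x = actX g (s (pi x))));
  apply/orbitP; rewrite pi_s.
Qed.

Definition orbit_swap (j : Q * X) : Q * X :=
  (pi j.2, actX (inv (orbit_coord j.2)) (s j.1)).

Lemma orbit_swap_bij : set_bij [set: Q * X] [set: Q * X] orbit_swap.
Proof.
have [pi_s _] := orbits; have pi_actX := pi_act orbits.
split=> // [[q1 y1] [q2 y2] _ _ [/= eq_pi eq_act]|[q x] _].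
  have eq_q : q1 = q2 by have := congr1 pi eq_act; rewrite !pi_actX !pi_s.
  subst q2; have /(can_inj (inv_involutive grp)) eq_coord :=
    free_act_inj grp acts free eq_act.
  by rewrite (orbit_coordP y1) (orbit_coordP y2) eq_coord eq_pi.
pose y := actX (inv (orbit_coord x)) (s q).
have pi_y : pi y = q by rewrite pi_actX pi_s.
have coord_y : orbit_coord y = inv (orbit_coord x).
  apply: (free_act_inj grp acts free (x := s q)).
  by rewrite -pi_y -orbit_coordP pi_y.
exists (pi x, y) => //.
by rewrite /orbit_swap /= pi_y coord_y (inv_involutive grp) -orbit_coordP.
Qed.

Variables (mu : X -> X -> R) (nub : Q -> R).
Hypotheses (rw : is_random_walk mu) (mu_equiv : equivariant_walk actX mu)
  (nub_ge0 : forall q, 0 <= nub q) (rev : reversible pi nub mu).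

(* Reindexing by [orbit_swap] exchanges the two endpoints of a step modulo the
   group, after which reversibility applies. *)
Lemma esum_orbit_walk (h : X -> R) : (forall x, 0 <= h x) ->
  (forall g x, h (actX g x) = h x) ->
  (\esum_(q in [set: Q]) ((nub q)%:E * \esum_(x in [set: X]) (mu (s q) x * h x)%:E)
   = \esum_(q in [set: Q]) (nub q * h (s q))%:E)%E.
Proof.
move=> h_ge0 h_inv; have [pi_s _] := orbits; have pi_actX := pi_act orbits.
have mu_ge0 x y : 0 <= mu x y by have [] := rw x.
have QX : [set: Q] `*`` (fun=> [set: X]) = [set: Q * X] by apply/seteqP.
transitivity (\esum_(q in [set: Q])
    \esum_(x in [set: X]) (nub q * (mu (s q) x * h x))%:E)%E.
  apply: eq_esum => q _; rewrite -ge0_esumZl //.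
  by move=> *; rewrite lee_fin mulr_ge0.
rewrite esum_esum; last by move=> *; rewrite lee_fin !mulr_ge0.
rewrite QX (reindex_esum _ _ _ _ orbit_swap_bij).
transitivity (\esum_(j in [set: Q * X]) (nub j.1 * h (s j.1) * mu (s j.1) j.2)%:E)%E.
  apply: eq_esum => -[q y] _; rewrite /orbit_swap /=.
  set x := actX _ (s q); have pi_x : pi x = q by rewrite pi_actX pi_s.
  have mu_x : mu x (s (pi y)) = mu (s q) y.
    by rewrite -(mu_equiv (orbit_coord y)) (actKV grp acts) -orbit_coordP.
  by rewrite mulrA -{1}(pi_s (pi y)) rev pi_x mu_x h_inv mulrAC.
rewrite -QX -(@esum_esum _ _ _ _ _ (fun q x => (nub q * h (s q) * mu (s q) x)%:E));
  last by move=> *; rewrite lee_fin !mulr_ge0.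
apply: eq_esum => q _; have [_ _ mu1] := rw (s q).
under eq_esum do rewrite EFinM.
by rewrite ge0_esumZl ?mu1 ?mule1 ?mulr_ge0 // => *; rewrite lee_fin.
Qed.

End orbit_sum.

Lemma local_energy_equivariant (R : realType) (Y : Type) (d : Y -> Y -> R) (p : R)
    (G : Type) (mul : G -> G -> G) (one : G) (inv : G -> G) (X : choiceType)
    (actX : G -> X -> X) (actY : G -> Y -> Y) (mu : X -> X -> R) (f : X -> Y) :
  is_group mul one inv -> is_action mul one actX -> is_random_walk mu ->
  equivariant_walk actX mu -> isometric_action d actY ->
  equivariant_map actX actY f ->
  forall g x, local_energy d p mu f (actX g x) = local_energy d p mu f x.
Proof.
move=> grp acts rw mu_equiv isom f_equiv g x.
apply/eqP; rewrite -eqe; apply/eqP.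
have pow_ge0 z y : 0 <= d (f z) (f y) `^ p by exact: powR_ge0.
rewrite -(esum_walk rw _ (pow_ge0 (actX g x))) -(esum_walk rw _ (pow_ge0 x)).
rewrite (reindex_esum [set: X] [set: X] (actX g)); last first.
  split=> // [a b _ _ /(can_inj (actK grp acts g))//|y _].
  by exists (actX (inv g) y) => //; rewrite (actKV grp acts).
by apply: eq_esum => y _; rewrite mu_equiv !f_equiv isom.
Qed.

Lemma energyE (R : realType) (Y : Type) (d : Y -> Y -> R) (p : R)
    (X Q : choiceType) (mu : X -> X -> R) (nub : Q -> R) (s : Q -> X) (f : X -> Y) :
  is_random_walk mu -> energy d p mu nub s f =
  ((2^-1)%:E * \esum_(q in [set: Q]) (nub q * local_energy d p mu f (s q))%:E)%E.
Proof.
move=> rw; congr (_ * _)%E; apply: eq_esum => q _.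
by rewrite esum_walk // => y; exact: powR_ge0.
Qed.

Lemma two_powM4_root_le (R : realType) (p : R) : 2 <= p -> (2 `^ p * 4) `^ p^-1 <= 4.
Proof.
move=> p2; have p_gt0 : 0 < p by lra.
have -> : 4 = 2 `^ 2 :> R by rewrite powR_mulrn //; lra.
rewrite -powRD; last by apply/implyP => _; lra.
rewrite -powRrM ler_powR ?ler1n // ler_pdivrMr //; lra.
Qed.

Section barycenter_bounds.
Variables (R : realType) (Y : Type) (d : Y -> Y -> R) (p c : R).
Hypotheses (dm : is_metric d) (dc : is_complete d) (geo : is_geodesic_space d)
  (uc : p_uniformly_convex d p c) (c_gt0 : 0 < c) (p_ge2 : 2 <= p).
Variables (X Q : choiceType) (s : Q -> X) (mu : X -> X -> R) (nub : Q -> R).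
Hypotheses (rw : is_random_walk mu) (nub_prob : is_prob_on nub).
Variable f : X -> Y.

Let p_ge1 : 1 <= p. Proof. by apply: le_trans p_ge2; rewrite ler1n. Qed.
Let nub_ge0 q : 0 <= nub q. Proof. by case: nub_prob. Qed.
Local Notation A := (A_p d p mu f).
Local Notation e := (local_energy d p mu f).
Local Notation SE := (\esum_(q in [set: Q]) (nub q * e (s q))%:E)%E.

Lemma dist_p_A_p_le :
  (dist_p d p nub s f A <= 4%:E * poweR (energy d p mu nub s f) p^-1)%E.
Proof.
have SE_ge0 : (0 <= SE)%E.
  by apply: esum_ge0 => q _; rewrite lee_fin mulr_ge0 ?local_energy_ge0.
have energy_ge0 : (0 <= energy d p mu nub s f)%E.
  by rewrite energyE // mule_ge0 // lee_fin invr_ge0.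
have SD_le : (\esum_(q in [set: Q]) (nub q * d (f (s q)) (A (s q)) `^ p)%:E
    <= ((2 `^ p * 4)%:E * energy d p mu nub s f))%E.
  rewrite energyE // muleA -EFinM -ge0_esumZl; last 2 first.
  - by rewrite mulr_ge0 ?powR_ge0 ?invr_ge0.
  - by move=> q _; rewrite lee_fin mulr_ge0 ?local_energy_ge0.
  apply: le_esum => q _; rewrite -EFinM lee_fin mulrCA ler_wpM2l //.
  have -> : 2 `^ p * 4 * 2^-1 = 2 `^ p * 2 :> R by field.
  exact: (dist_A_p_le dm dc geo uc c_gt0 p_ge1 rw).
rewrite /dist_p; apply: le_trans (gt0_ler_poweR _ _ _ SD_le) _.
- by rewrite invr_ge0 (le_trans _ p_ge1).
- by rewrite in_itv /= leey andbT esum_ge0 // => q _; rewrite lee_fin mulr_ge0 ?powR_ge0.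
- by rewrite in_itv /= leey andbT mule_ge0 // lee_fin mulr_ge0 ?powR_ge0.
rewrite poweRM ?lee_fin ?mulr_ge0 ?powR_ge0 // poweR_EFin.
by rewrite lee_wpmul2r ?poweR_ge0 // lee_fin two_powM4_root_le.
Qed.

Variables (G : Type) (mul : G -> G -> G) (one : G) (inv : G -> G).
Variables (actX : G -> X -> X) (actY : G -> Y -> Y) (pi : X -> Q).
Hypotheses (grp : is_group mul one inv) (actsX : is_action mul one actX)
  (free : free_action one actX) (isom : isometric_action d actY)
  (orbits : is_orbit_space actX pi s) (mu_equiv : equivariant_walk actX mu)
  (rev : reversible pi nub mu) (f_equiv : equivariant_map actX actY f).

Lemma energy_A_p_le : (energy d p mu nub s A <=
  (2 `^ p * 2 `^ p * (2 `^ p * 2 + 1 + 2 `^ p * 2))%:E * energy d p mu nub s f)%E.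
Proof.
set K := 2 `^ p * 2 `^ p; set B := 2 `^ p * 2.
have K_ge0 : 0 <= K by rewrite mulr_ge0 ?powR_ge0.
have B_ge0 : 0 <= B by rewrite mulr_ge0 ?powR_ge0.
have e_ge0 x : 0 <= e x by exact: local_energy_ge0.
have e_inv := local_energy_equivariant p grp actsX rw mu_equiv isom f_equiv.
pose M x := \sum_(y <- supp mu x) mu x y * e y.
have M_ge0 x : 0 <= M x.
  by have [mu_ge0 _ _] := rw x; apply: sumr_ge0 => y _; rewrite mulr_ge0.
have SM : (\esum_(q in [set: Q]) (nub q * M (s q))%:E = SE)%E.
  rewrite -(esum_orbit_walk grp actsX free orbits rw mu_equiv nub_ge0 rev e_ge0 e_inv).
  by apply: eq_esum => q _; rewrite esum_walk // EFinM.
rewrite !energyE // muleCA lee_wpmul2l ?lee_fin ?invr_ge0 //.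
apply: (@le_trans _ _ (\esum_(q in [set: Q])
    ((K * (B + 1))%:E * (nub q * e (s q))%:E + (K * B)%:E * (nub q * M (s q))%:E))%E).
  apply: le_esum => q _; rewrite -!EFinM -EFinD lee_fin.
  apply: le_trans (ler_wpM2l (nub_ge0 q) (local_energy_A_p_le dm dc geo uc c_gt0
    p_ge1 rw f (s q))) _.
  by rewrite -/K -/B -/(M (s q)) le_eqVlt; apply/orP; left; apply/eqP; ring.
rewrite esumD; last 2 first.
- by move=> q _; rewrite -EFinM lee_fin !mulr_ge0 ?addr_ge0.
- by move=> q _; rewrite -EFinM lee_fin !mulr_ge0.
rewrite !ge0_esumZl ?mulr_ge0 ?addr_ge0 //; try by move=> q _; rewrite lee_fin mulr_ge0.
rewrite SM -ge0_muleDl ?lee_fin ?mulr_ge0 ?addr_ge0 // -EFinD.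
by rewrite le_eqVlt; apply/orP; left; apply/eqP; congr (_%:E * _)%E; ring.
Qed.

End barycenter_bounds.

Theorem lemma3p7 (R : realType) :
  forall cY : R, 0 < cY ->
  exists C1 : R, forall p : R, 2 <= p ->
  exists C2 : R,
  forall (Y : Type) (d : Y -> Y -> R),
    is_metric d -> is_complete d -> is_geodesic_space d ->
    p_uniformly_convex d p cY ->
  forall (G : Type) (mul : G -> G -> G) (one : G) (inv : G -> G),
    is_group mul one inv ->
  forall (X : choiceType) (actX : G -> X -> X),
    is_action mul one actX -> free_action one actX ->
  forall (actY : G -> Y -> Y),
    is_action mul one actY -> isometric_action d actY ->
  forall (Q : choiceType) (pi : X -> Q) (s : Q -> X),
    is_orbit_space actX pi s ->
  forall (mu : X -> X -> R),
    is_random_walk mu -> equivariant_walk actX mu ->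
  forall (nub : Q -> R),
    is_prob_on nub -> reversible pi nub mu ->
  forall f : X -> Y, in_B d p actX actY mu nub s f ->
    (dist_p d p nub s f (A_p d p mu f)
       <= C1%:E * poweR (energy d p mu nub s f) p^-1)%E /\
    (energy d p mu nub s (A_p d p mu f) <= C2%:E * energy d p mu nub s f)%E.
Proof.
move=> cY cY_gt0; exists 4 => p p_ge2.
exists (2 `^ p * 2 `^ p * (2 `^ p * 2 + 1 + 2 `^ p * 2)).
move=> Y d dm dc geo uc G mul one inv grp X actX actsX free actY _ isom Q pi s
  orbits mu rw mu_equiv nub nub_prob rev f [f_equiv _].
split; first exact: (dist_p_A_p_le dm dc geo uc cY_gt0 p_ge2 s rw nub_prob f).
exact: (energy_A_p_le dm dc geo uc cY_gt0 p_ge2 rw nub_prob grp actsX free isom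
  orbits mu_equiv rev f_equiv).
Qed.
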